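(* Let $T_1,\dots,T_m$ be a sequence of conjunctions over $\{0,1\}^n$, presented one at a time, each of which is a conjunction of some subset of metafeatures $m_1,\dots,m_k$ satisfying the anchor-variable condition. Then there is an online learner that exactly learns every target in the sequence using only $O(mk+n^3)$ equivalence queries in total.
   Context: A monomial/conjunction of positive variables is identified with its set of variables; a conjunction of a subset of metafeatures is the union of their variable sets. Metafeatures $m_1,\dots,m_k$ satisfy the anchor-variable condition if each $m_i$ contains a variable belonging to no other $m_j$. In the equivalence query model, the learner proposes a hypothesis and either is told it is exactly correct or receives a counterexample; the targets arrive sequentially and the learner may retain information (e.g., learned hypotheses) from earlier targets. *)

From mathcomp Require Import all_boot.
Set Implicit Arguments. Unset Strict Implicit. Unset Printing Implicit Defensive.

(* An assignment x in {0,1}^n is identified with the set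
   of variables it sets to 1.  A monotone conjunction (monomial) is identified
   with its set of variables T; it evaluates to true on x iff T \subset x. *)
Definition assignment (n : nat) := {set 'I_n}.
Definition conj_eval (n : nat) (T : {set 'I_n}) (x : assignment n) : bool :=
  T \subset x.

(* A hypothesis is an arbitrary boolean function on {0,1}^n, given as its set
   of positive assignments (the learner need not be proper). *)
Definition hypothesis (n : nat) := {set assignment n}.

Definition exact (n : nat) (h : hypothesis n) (T : {set 'I_n}) : Prop :=
  forall x : assignment n, (x \in h) = conj_eval T x.

Definition anchor_condition (n k : nat) (ms : 'I_k -> {set 'I_n}) : Prop :=
  forall i : 'I_k, exists v : 'I_n, v \in ms i /\ (forall j : 'I_k, j != i -> v \notin ms j).

Definition metafeature_conj (n k : nat) (ms : 'I_k -> {set 'I_n}) (T : {set 'I_n}) : Prop :=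
  exists S : {set 'I_k}, T = \bigcup_(i in S) ms i.

(* Interaction history: Some x = a counterexample x was returned;
   None = the query was answered "correct" (and the next target begins). *)
Definition event (n : nat) := option (assignment n).
Definition history (n : nat) := seq (event n).

(* An online learner: proposes the next hypothesis from the whole history
   (so it may retain anything learned from earlier targets). *)
Definition learner (n : nat) := history n -> hypothesis n.

Definition oracle (n : nat) := {set 'I_n} -> history n -> hypothesis n -> assignment n.

Definition valid_oracle (n : nat) (adv : oracle n) : Prop :=
  forall (T : {set 'I_n}) (hist : history n) (h : hypothesis n),
    ~ exact h T -> (adv T hist h \in h) != conj_eval T (adv T hist h).

(* run L adv Ts hist q : starting from history hist, the learner L, facing
   oracle adv, exactly learns the targets Ts (in order, one at a time)
   using q equivalence queries in total (each query counted, including the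
   final successful one for each target). *)
Inductive run (n : nat) (L : learner n) (adv : oracle n) :
  seq {set 'I_n} -> history n -> nat -> Prop :=
| run_nil hist : run L adv [::] hist 0
| run_correct T Ts hist q :
    exact (L hist) T ->
    run L adv Ts (rcons hist None) q ->
    run L adv (T :: Ts) hist q.+1
| run_wrong T Ts hist q :
    ~ exact (L hist) T ->
    run L adv (T :: Ts) (rcons hist (Some (adv T hist (L hist)))) q ->
    run L adv (T :: Ts) hist q.+1.

From mathcomp Require Import all_boot all_order all_algebra.
From mathcomp Require Import lra zify.
Import Order.TTheory GRing.Theory Num.Theory.

Set Implicit Arguments.
Unset Strict Implicit.
Unset Printing Implicit Defensive.

(* The learner is a weighted majority vote over "models": a model guesses the
   anchor set A and, for every anchor, the metafeature it anchors, so there are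
   2^(n + n^2) of them, and a target of the model is a union of the guessed
   metafeatures over a subset S of A.  Each model starts with weight 1 and, for
   every target, spreads a factor 2^-|A| uniformly over the subsets S.  A wrong
   prediction halves the total weight, a correct final query does not increase
   it, and the true model (|A| <= k) keeps weight at least 2^-(k m) for m
   targets.  Hence at most n + n^2 + k m queries are wrong, and there are m
   correct ones. *)

Definition conj_set (n : nat) (T : {set 'I_n}) : hypothesis n := [set x | conj_eval T x].

Lemma exact_conj_set n (h : hypothesis n) T : exact h T <-> h = conj_set T.
Proof.
split=> [hT | ->]; last by move=> x; rewrite inE.
by apply/setP=> x; rewrite inE hT.
Qed.

Lemma exact_dec n (h : hypothesis n) T : exact h T \/ ~ exact h T.
Proof.
rewrite exact_conj_set; case: (eqVneq h (conj_set T)) => [-> | /eqP]; by [left | right].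
Qed.

Section PotentialArgument.
Local Open Scope ring_scope.
Variables (n : nat) (L : learner n) (adv : oracle n).
Variables (inv : history n -> seq {set 'I_n} -> Prop) (W : history n -> rat) (lb : rat).
Hypothesis lb_gt0 : 0 < lb.
Hypothesis W_ge_lb : forall hist T Ts, inv hist (T :: Ts) -> lb <= W hist.
Hypothesis inv_correct : forall hist T Ts, inv hist (T :: Ts) -> exact (L hist) T ->
  inv (rcons hist None) Ts /\ W (rcons hist None) <= W hist.
Hypothesis inv_wrong : forall hist T Ts, inv hist (T :: Ts) -> ~ exact (L hist) T ->
  inv (rcons hist (Some (adv T hist (L hist)))) (T :: Ts) /\
  2 * W (rcons hist (Some (adv T hist (L hist)))) <= W hist.

Lemma run_of_potential N Ts hist :
  inv hist Ts -> W hist <= 2 ^+ N * lb ->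
  exists q, run L adv Ts hist q /\ (q <= N + size Ts)%N.
Proof.
elim/ltn_ind: N Ts hist => N IHN Ts.
elim: Ts => [|T Ts IHTs] hist invTs WN; first by exists 0%N; split; [exact: run_nil|].
have [hT | hT] := exact_dec (L hist) T.
  have [invTs' W_le] := inv_correct invTs hT.
  have [q [runq le_q]] := IHTs _ invTs' (le_trans W_le WN).
  by exists q.+1; split; [exact: run_correct | rewrite /= addnS ltnS].
have [invTs' W_halved] := inv_wrong invTs hT.
have lb_le := W_ge_lb invTs'.
case: N IHN IHTs WN => [|N] IHN _ WN.
  by exfalso; move: lb_gt0 WN; rewrite expr0 mul1r; lra.
have WN' : W (rcons hist (Some (adv T hist (L hist)))) <= 2 ^+ N * lb.
  by move: WN; rewrite exprS -mulrA; lra.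
have [q [runq le_q]] := IHN N (ltnSn N) _ _ invTs' WN'.
by exists q.+1; split; [exact: run_wrong | rewrite addSn ltnS].
Qed.

End PotentialArgument.

Section MajorityLearner.
Local Open Scope ring_scope.
Variable n : nat.

Definition model := ({set 'I_n} * {ffun 'I_n -> {set 'I_n}})%type.

Definition model_conj (c : model) (S : {set 'I_n}) : {set 'I_n} := \bigcup_(v in S) c.2 v.

Definition representable (c : model) (T : {set 'I_n}) :=
  exists2 S, S \in powerset c.1 & T = model_conj c S.

Record state := State {
  solved : seq (hypothesis n);
  labelled : seq (assignment n * bool) }.

Definition fits (c : model) (h : hypothesis n) :=
  [exists S in powerset c.1, h == conj_set (model_conj c S)].

Definition labels_agree (T : {set 'I_n}) (ex : seq (assignment n * bool)) :=
  all (fun p => conj_eval T p.1 == p.2) ex.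

Definition alive (s : state) (c : model) (S : {set 'I_n}) :=
  [&& S \in powerset c.1, all (fits c) (solved s)
    & labels_agree (model_conj c S) (labelled s)].

(* A solved target is charged the price 2^-|A| of a single consistent subset. *)
Definition weight (s : state) (P : model -> {set 'I_n} -> bool) : rat :=
  \sum_(c : model) \sum_(S | alive s c S && P c S)
    2^-1 ^+ (#|c.1| * (size (solved s)).+1).

Definition total_weight (s : state) := weight s (fun _ _ => true).

Definition majority (s : state) : hypothesis n :=
  [set x | total_weight s <= 2 * weight s (fun c S => conj_eval (model_conj c S) x)].

Definition step (s : state) (e : event n) : state :=
  match e with
  | None => State (majority s :: solved s) [::]
  | Some x => State (solved s) ((x, x \notin majority s) :: labelled s)
  end.

Definition state_of (hist : history n) : state := foldl step (State [::] [::]) hist.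

Definition majority_learner : learner n := fun hist => majority (state_of hist).

Lemma state_of_rcons hist e : state_of (rcons hist e) = step (state_of hist) e.
Proof. by rewrite /state_of foldl_rcons. Qed.

Lemma half_ge0 : 0 <= 2^-1 :> rat. Proof. by rewrite invr_ge0 ler0n. Qed.

Lemma half_le1 : 2^-1 <= 1 :> rat. Proof. by rewrite invf_le1 ?ler1n ?ltr0n. Qed.

Lemma weight_ge0 s P : 0 <= weight s P.
Proof.
by apply: sumr_ge0 => c _; apply: sumr_ge0 => S _; rewrite exprn_ge0 ?half_ge0.
Qed.

Lemma weight_split s P Q :
  weight s P =
  weight s (fun c S => P c S && Q c S) + weight s (fun c S => P c S && ~~ Q c S).
Proof.
rewrite /weight -big_split /=; apply: eq_bigr => c _.
by rewrite (bigID (fun S => Q c S)) /=; congr (_ + _); apply: eq_bigl => S; rewrite andbA.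
Qed.

Lemma eq_weight s P Q : P =2 Q -> weight s P = weight s Q.
Proof. by move=> PQ; apply: eq_bigr => c _; apply: eq_bigl => S; rewrite PQ. Qed.

Lemma weight_mistake s x : 2 * total_weight (step s (Some x)) <= total_weight s.
Proof.
have -> : total_weight (step s (Some x)) =
    weight s (fun c S => conj_eval (model_conj c S) x == (x \notin majority s)).
  apply: eq_bigr => c _; apply: eq_bigl => S.
  by rewrite /alive /labels_agree /= andbT; case: (_ == _); rewrite ?andbT ?andbF.
set A := weight s (fun c S => true && conj_eval (model_conj c S) x).
set B := weight s (fun c S => true && ~~ conj_eval (model_conj c S) x).
have W_AB : total_weight s = A + B := weight_split _ _ _.
rewrite inE (_ : weight s (fun c S => conj_eval (model_conj c S) x) = A) //.
case: (leP (total_weight s) (2 * A)) => maj /=.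
  suff -> : weight s (fun c S => conj_eval (model_conj c S) x == false) = B by lra.
  by apply: eq_weight => c S; case: conj_eval.
suff -> : weight s (fun c S => conj_eval (model_conj c S) x == true) = A by lra.
by apply: eq_weight => c S; case: conj_eval.
Qed.

Lemma sum_powerset_half (A : {set 'I_n}) (e : nat) :
  \sum_(S in powerset A) 2^-1 ^+ (#|A| + e) = 2^-1 ^+ e :> rat.
Proof.
rewrite sumr_const card_powerset -(mulr_natr _ (2 ^ #|A|)) natrX exprD mulrAC.
by rewrite -exprMn mulVf ?expr1n ?mul1r.
Qed.

Lemma weight_init : total_weight (State [::] [::]) = 2 ^+ (n + n * n).
Proof.
transitivity (\sum_(c : model) (1 : rat)).
  apply: eq_bigr => c _; rewrite -[RHS](sum_powerset_half c.1 0) addn0 muln1.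
  by apply: eq_bigl => S; rewrite /alive /= !andbT.
rewrite sumr_const card_prod card_ffun card_ord.
have -> : #|{set 'I_n}| = (2 ^ n)%N.
  rewrite -[in RHS](card_ord n) -[#|'I_n|]cardsT -card_powerset.
  by apply: eq_card => S; rewrite powersetE subsetT.
by rewrite -expnM -expnD natrX.
Qed.

Lemma weight_ge_alive s c S :
  alive s c S -> 2^-1 ^+ (#|c.1| * (size (solved s)).+1) <= total_weight s.
Proof.
move=> cS; rewrite /total_weight /weight (bigD1 c) //= (bigD1 S) ?cS //= -addrA lerDl.
have term_ge0 (e : nat) : 0 <= 2^-1 ^+ e :> rat by rewrite exprn_ge0 ?half_ge0.
by rewrite addr_ge0 ?sumr_ge0 // => c' _; rewrite sumr_ge0.
Qed.

Lemma weight_completion s T :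
  majority s = conj_set T -> labels_agree T (labelled s) ->
  total_weight (step s None) <= total_weight s.
Proof.
move=> majT agreeT; apply: ler_sum => c _ /=.
have [/andP[fits_maj fits_solved] | nfit] :=
  boolP (fits c (majority s) && all (fits c) (solved s)); last first.
  rewrite big_pred0 ?sumr_ge0 // => [S _ | S]; first by rewrite exprn_ge0 ?half_ge0.
  by rewrite /alive /= (negbTE nfit) andbF.
have /existsP[S0 /andP[S0A /eqP majS0]] := fits_maj.
have evalS0 y : conj_eval (model_conj c S0) y = conj_eval T y.
  by have /setP/(_ y) := etrans (esym majS0) majT; rewrite !inE.
have S0_alive : alive s c S0.
  rewrite /alive S0A fits_solved /=; apply: etrans agreeT.
  by apply: eq_all => p; rewrite evalS0.
rewrite (eq_bigl (fun S => S \in powerset c.1)) => [|S]; last first.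
  by rewrite /alive /= fits_maj fits_solved !andbT.
rewrite mulnS sum_powerset_half (bigD1 S0) ?S0_alive //= lerDl.
by rewrite sumr_ge0 // => S _; rewrite exprn_ge0 ?half_ge0.
Qed.

Section Invariant.
Variables (c : model) (m : nat) (adv : oracle n).
Hypothesis adv_valid : valid_oracle adv.

Definition run_inv (hist : history n) (Ts : seq {set 'I_n}) :=
  let s := state_of hist in
  [/\ (size (solved s) + size Ts)%N = m, all (fits c) (solved s),
      forall T, T \in Ts -> representable c T &
      if Ts is T :: _ then labels_agree T (labelled s) else true].

Lemma run_inv_lower hist T Ts :
  run_inv hist (T :: Ts) -> 2^-1 ^+ (#|c.1| * m) <= total_weight (state_of hist).
Proof.
case=> size_m fits_solved repr agreeT.
have [S SA defT] := repr T (mem_head _ _).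
apply: le_trans (@weight_ge_alive _ c S _); last first.
  by rewrite /alive SA fits_solved -defT agreeT.
rewrite ler_wiXn2l ?half_ge0 ?half_le1 //.
by rewrite leq_mul2l -size_m addnS ltnS leq_addr orbT.
Qed.

Lemma run_inv_correct hist T Ts :
  run_inv hist (T :: Ts) -> exact (majority_learner hist) T ->
  run_inv (rcons hist None) Ts /\
  total_weight (state_of (rcons hist None)) <= total_weight (state_of hist).
Proof.
case=> size_m fits_solved repr agreeT.
rewrite exact_conj_set /majority_learner => majT.
rewrite /run_inv state_of_rcons; split; last exact: weight_completion majT agreeT.
have [S SA defT] := repr T (mem_head _ _).
split=> /=; first by rewrite -size_m /= addSnnS.
- by rewrite fits_solved andbT; apply/existsP; exists S; rewrite SA majT defT eqxx.
- by move=> T' T'Ts; apply: repr; rewrite in_cons T'Ts orbT.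
- by case: Ts {size_m repr}.
Qed.

Lemma run_inv_wrong hist T Ts :
  run_inv hist (T :: Ts) -> ~ exact (majority_learner hist) T ->
  run_inv (rcons hist (Some (adv T hist (majority_learner hist)))) (T :: Ts) /\
  2 * total_weight (state_of (rcons hist (Some (adv T hist (majority_learner hist)))))
    <= total_weight (state_of hist).
Proof.
case=> size_m fits_solved repr agreeT notT.
rewrite /run_inv state_of_rcons; split; last exact: weight_mistake.
split=> //=; rewrite agreeT andbT.
by have := adv_valid hist notT; case: (_ \in _); case: conj_eval.
Qed.

End Invariant.

Lemma majority_learner_run (c : model) (adv : oracle n) (Ts : seq {set 'I_n}) :
  valid_oracle adv -> (forall T, T \in Ts -> representable c T) ->
  exists q, run majority_learner adv Ts [::] q /\
            (q <= n + n * n + #|c.1| * size Ts + size Ts)%N.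
Proof.
move=> adv_valid repr.
apply: (@run_of_potential _ _ _ (run_inv c (size Ts))
          (fun hist => total_weight (state_of hist)) (2^-1 ^+ (#|c.1| * size Ts))).
- by rewrite exprn_gt0 // invr_gt0 ltr0n.
- exact: run_inv_lower.
- exact: run_inv_correct.
- exact: run_inv_wrong.
- by split=> //; case: (Ts).
by rewrite weight_init [in leRHS]exprD -mulrA -exprMn mulfV ?expr1n ?mulr1.
Qed.

End MajorityLearner.

Lemma anchored_model n k (ms : 'I_k -> {set 'I_n}) :
  anchor_condition ms ->
  exists c : model n, (#|c.1| <= k)%N /\
    forall T, metafeature_conj ms T -> representable c T.
Proof.
move=> /fin_all_exists[g gP].
have g_inj : injective g.
  move=> i j gij; apply: contraTeq (gP i).1 => ij.
  by rewrite gij; apply: (gP j).2.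
exists (g @: setT, [ffun v => \bigcup_(i | g i == v) ms i]); split.
  by rewrite (leq_trans (leq_imset_card _ _)) // cardsT card_ord.
move=> _ [S ->]; exists (g @: S); first by rewrite powersetE imsetS ?subsetT.
apply/setP=> y; apply/bigcupP/bigcupP => [[i iS yi] | [_ /imsetP[i iS ->]]].
  by exists (g i); [exact: imset_f | rewrite ffunE; apply/bigcupP; exists i].
by rewrite ffunE => /bigcupP[j /eqP/g_inj ->] yi; exists i.
Qed.

Theorem corollary1 :
  exists C : nat, forall n : nat, exists L : learner n,
    forall (k : nat) (ms : 'I_k -> {set 'I_n}) (Ts : seq {set 'I_n}) (adv : oracle n),
      0 < k ->
      anchor_condition ms ->
      (forall T, T \in Ts -> metafeature_conj ms T) ->
      valid_oracle adv ->
      exists q : nat, run L adv Ts [::] q /\ q <= C * (size Ts * k + n ^ 3).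
Proof.
exists 2 => n; exists (@majority_learner n) => k ms Ts adv k_gt0 anchors Ts_meta adv_valid.
have [c [c_small c_repr]] := anchored_model anchors.
have [q [run_q q_le]] :=
  majority_learner_run adv_valid (fun T TTs => c_repr T (Ts_meta T TTs)).
exists q; split => //; apply: leq_trans q_le _.
have : #|c.1| * size Ts <= size Ts * k by rewrite mulnC leq_mul2l c_small orbT.
have : size Ts <= size Ts * k by rewrite leq_pmulr.
have : n + n * n <= 2 * n ^ 3.
  by rewrite !expnS expn0 muln1; case: (posnP n) => [-> // | n_gt0]; nia.
lia.
Qed.
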